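(* Let $X \in \Lambda^2_{14} = \mathfrak{g}_2$ with $\operatorname{rank} X \leq 4$. Then there exists a $\mathrm{G}_2$-adapted frame $\mathcal{B} = \{e_1,\dots,e_7\}$ such that the matrix $[X]_{\mathcal{B}}$, whose $(i,j)$ entry is $X(e_i,e_j)$, has the form $$ [X]_{\mathcal{B}} = \begin{pmatrix} 0_{3\times 3} & 0_{3\times 4} \\ 0_{4\times 3} & Y \end{pmatrix}, \qquad Y = \begin{pmatrix} 0 & -a & -b & -c \\ a & 0 & -c & b \\ b & c & 0 & -a \\ c & -b & a & 0 \end{pmatrix} $$ for some $a,b,c\in\mathbb{R}$.
   Context: Equip $\mathbb{R}^7$ with its standard inner product, orientation and basis. Let $\varphi = e_{123} - e_{167} - e_{527} - e_{563} - e_{415} - e_{426} - e_{437}$ ($e_{ijk} = e_i\wedge e_j\wedge e_k$) and define $\times$ by $\langle u\times v,w\rangle = \varphi(u,v,w)$. A skew bilinear form $X$ is identified with the operator $X$ given by $X(a,b)=\langle X(a),b\rangle$. $\Lambda^2_{14}=\mathfrak{g}_2$ is the set of skew bilinear forms $X$ with $X(v\times w) = X(v)\times w + v\times X(w)$ for all $v,w$. A $\mathrm{G}_2$-adapted frame is an oriented orthonormal basis $\{e_1,\dots,e_7\}$ with $e_3 = e_1\times e_2$, $e_5 = e_1\times e_4$, $e_6 = e_2\times e_4$, $e_7 = e_3\times e_4$. *)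

From HB Require Import structures.
From mathcomp Require Import all_boot all_order all_algebra.
From mathcomp Require Import reals.
Set Implicit Arguments. Unset Strict Implicit. Unset Printing Implicit Defensive.
Import Order.TTheory GRing.Theory Num.Theory.
Local Open Scope ring_scope.

Section G2.
Variable R : realType.

Definition crd (u : 'rV[R]_7) (n : nat) : R := u 0 (inord n).

Definition dot (u v : 'rV[R]_7) : R := \sum_(i < 7) u 0 i * v 0 i.

(* (e_i /\ e_j /\ e_k)(u,v,w), indices 0-based *)
Definition e3 (i j k : nat) (u v w : 'rV[R]_7) : R :=
  let x b := match nat_of_ord b with 0 => u | 1 => v | _ => w end in
  let idx a := match nat_of_ord a with 0 => i | 1 => j | _ => k end in
  \det (\matrix_(a < 3, b < 3) crd (x b) (idx a)).

(* phi = e123 - e167 - e527 - e563 - e415 - e426 - e437 (1-based in paper) *)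
Definition phi (u v w : 'rV[R]_7) : R :=
  e3 0 1 2 u v w - e3 0 5 6 u v w - e3 4 1 6 u v w - e3 4 5 2 u v w
  - e3 3 0 4 u v w - e3 3 1 5 u v w - e3 3 2 6 u v w.

(* cross product: <u x v, w> = phi(u,v,w); its k-th coordinate is phi(u,v,e_k) *)
Definition cross (u v : 'rV[R]_7) : 'rV[R]_7 :=
  \row_(k < 7) phi u v (delta_mx 0 k).

(* A skew bilinear form X(a,b) = a *m X *m b^T is stored as its matrix;
   the associated operator is a |-> a *m X, since <a *m X, b> = X(a,b). *)
Definition skew (X : 'M[R]_7) : Prop := X^T = - X.

Definition in_g2 (X : 'M[R]_7) : Prop :=
  skew X /\
  forall v w : 'rV[R]_7, cross v w *m X = cross (v *m X) w + cross v (w *m X).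

(* A frame is a 7x7 matrix E whose i-th row is e_(i+1). *)
Definition frame_vec (E : 'M[R]_7) (i : nat) : 'rV[R]_7 := row (inord i) E.

Definition G2_adapted (E : 'M[R]_7) : Prop :=
  (forall i j : 'I_7, dot (row i E) (row j E) = (i == j)%:R) /\
  0 < \det E /\
  frame_vec E 2 = cross (frame_vec E 0) (frame_vec E 1) /\
  frame_vec E 4 = cross (frame_vec E 0) (frame_vec E 3) /\
  frame_vec E 5 = cross (frame_vec E 1) (frame_vec E 3) /\
  frame_vec E 6 = cross (frame_vec E 2) (frame_vec E 3).

Definition mx_in_frame (X E : 'M[R]_7) : 'M[R]_7 := E *m X *m E^T.

Definition normal_form (a b c : R) : 'M[R]_7 :=
  \matrix_(i < 7, j < 7)
    match nat_of_ord i, nat_of_ord j with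
    | 3, 4 => - a | 3, 5 => - b | 3, 6 => - c
    | 4, 3 => a   | 4, 5 => - c | 4, 6 => b
    | 5, 3 => b   | 5, 4 => c   | 5, 6 => - a
    | 6, 3 => c   | 6, 4 => - b | 6, 5 => a
    | _, _ => 0
    end.

End G2.

From Pilot Require Import Defs.
From HB Require Import structures.
From mathcomp Require Import all_boot all_order all_algebra.
From mathcomp Require Import reals perm complex.
From mathcomp Require Import ring lra zify.
Set Implicit Arguments. Unset Strict Implicit. Unset Printing Implicit Defensive.
Import Order.TTheory GRing.Theory Num.Theory.
Local Open Scope ring_scope.

(* Since X is a derivation of the cross product, its kernel, of dimension at least 3, is
   closed under the cross product. Choose orthonormal a, b in the kernel and a unit vector
   c orthogonal to a, b and a x b. The frame (a, b, a x b, c, a x c, b x c, (a x b) x c)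
   is orthonormal and preserves the cross product; in it X is a derivation vanishing on
   e0, e1, e2, so X(e4), X(e5), X(e6) are e0 x X(e3), e1 x X(e3), e2 x X(e3), which is the
   normal form.
   The frame is positively oriented because G2 lies in SO(7): an orthogonal automorphism of
   the cross product with determinant -1 has a (-1)-eigenvector; moving it to e0 and
   composing with a sign change in G2 yields an automorphism fixing e0, hence commuting
   with the complex structure e0 x - on the orthogonal complement of e0, so that its
   determinant is |det_C|^2 >= 0. *)

Lemma det_mx33 (R : comNzRingType) (f : nat -> nat -> R) :
  \det (\matrix_(i < 3, j < 3) f i j) =
    f 0 0 * f 1 1 * f 2 2 - f 0 0 * f 1 2 * f 2 1
  - f 0 1 * f 1 0 * f 2 2 + f 0 1 * f 1 2 * f 2 0
  + f 0 2 * f 1 0 * f 2 1 - f 0 2 * f 1 1 * f 2 0.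
Proof.
rewrite (expand_det_row _ 0) !big_ord_recl big_ord0 /cofactor.
rewrite !(expand_det_row _ 0) !big_ord_recl !big_ord0 /cofactor !det_mx11 !mxE /=.
ring.
Qed.

Lemma det_realify_ge0 (F : rcfType) n (A B : 'M[F]_n) :
  0 <= \det (block_mx A (- B) B A).
Proof.
pose f := real_complex F; pose Ac := map_mx f A; pose Bc := map_mx f B.
pose Z := Ac + 'i%C *: Bc.
pose P (s : F[i]) : 'M[F[i]]_(n + n) := block_mx 1%:M 0 s%:M 1%:M.
have detP s : \det (P s) = 1 by rewrite det_lblock !det1 mulr1.
have conjZ : map_mx conjc Z = Ac - 'i%C *: Bc.
  by apply/matrixP => i j; rewrite !mxE /=; simpc.
(* [P i] and [P (-i)] triangularize the complexified matrix, with diagonal blocks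
   [Z = A + iB] and its conjugate. *)
have : P 'i%C *m map_mx f (block_mx A (- B) B A) *m P (- 'i%C) =
       block_mx Z (- Bc) 0 (map_mx conjc Z).
  rewrite /P map_block_mx !mulmx_block.
  rewrite !(mul_scalar_mx, mul_mx_scalar, scale1r, mul0mx, mulmx0, add0r, addr0).
  rewrite conjZ map_mxN -/Ac -/Bc.
  have -> : Ac + - 'i%C *: - Bc = Z by rewrite scaleNr scalerN opprK.
  have -> : 'i%C *: Ac + Bc + - 'i%C *: ('i%C *: - Bc + Ac) = 0.
    rewrite scalerDr scalerA mulNr -expr2 sqr_i opprK scale1r scaleNr.
    by rewrite -addrA (addrA Bc) addrN add0r addrN.
  by rewrite scalerN addrC.
move=> /(congr1 determinant).
rewrite !det_mulmx !detP mul1r mulr1 det_ublock !det_map_mx => detM.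
by rewrite -ler0c detM mulcJ_ge0.
Qed.

Lemma det_orthogonal (R : idomainType) n (M : 'M[R]_n) :
  M *m M^T = 1%:M -> \det M = 1 \/ \det M = -1.
Proof.
move=> /(congr1 determinant); rewrite det_mulmx det_tr det1 => /eqP.
by rewrite -expr2 sqrf_eq1 => /orP[] /eqP; [left | right].
Qed.

Lemma orthogonal_eigen_neg1 (R : realFieldType) n (M : 'M[R]_n) :
  M *m M^T = 1%:M -> \det M = -1 -> exists2 v : 'rV[R]_n, v != 0 & v *m M = - v.
Proof.
move=> MMt dM.
have MI : M + 1%:M = M *m (M + 1%:M)^T.
  by rewrite linearD /= trmx1 mulmxDr MMt mulmx1 addrC.
have : \det (M + 1%:M) = 0.
  by move: (congr1 determinant MI); rewrite det_mulmx det_tr dM mulN1r => h; lra.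
move/eqP/det0P => [v nv /eqP]; rewrite mulmxDr mulmx1 addr_eq0 => /eqP vM.
by exists v.
Qed.

Lemma det_conj_perm (F : comNzRingType) n (s : 'S_n) (M : 'M[F]_n) :
  \det (row_perm s (col_perm s M)) = \det M.
Proof.
rewrite row_permE col_permE !det_mulmx !det_perm odd_permV mulrCA.
by rewrite -expr2 sqrr_sign mulr1.
Qed.

(* The coordinate order (0 | 1 3 6 | 2 4 5): [cross e_0] maps [e_1], [e_3], [e_6] to
   [e_2], [e_4], [e_5], so this reordering turns [cross e_0] into [[0, -1], [1, 0]]. *)
Definition g2_perm_fun (i : 'I_7) : 'I_7 := inord (nth 0 [:: 0; 1; 3; 6; 2; 4; 5] i).

Lemma g2_perm_inj : injective g2_perm_fun.
Proof.
apply: (can_inj (g := fun i : 'I_7 => inord (index (val i) [:: 0; 1; 3; 6; 2; 4; 5]))).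
by case=> [[|[|[|[|[|[|[|i]]]]]]] hi] //; apply/val_inj; rewrite /g2_perm_fun /= !inordK.
Qed.

Arguments crd : simpl never.

Section G2.
Variable R : realType.
Implicit Types (u v w x y a b c : 'rV[R]_7) (A X Y : 'M[R]_7).

Local Notation "''e[' n ]" := (delta_mx 0 (inord n) : 'rV[R]_7) (format "''e[' n ]").

Lemma crdE u (i : 'I_7) : u 0 i = crd u i.
Proof. by rewrite /crd inord_val. Qed.

Lemma eq_row7 u v :
  crd u 0 = crd v 0 -> crd u 1 = crd v 1 -> crd u 2 = crd v 2 ->
  crd u 3 = crd v 3 -> crd u 4 = crd v 4 -> crd u 5 = crd v 5 ->
  crd u 6 = crd v 6 -> u = v.
Proof.
move=> h0 h1 h2 h3 h4 h5 h6; apply/rowP => i; rewrite !crdE.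
by case: i => [[|[|[|[|[|[|[|i]]]]]]]].
Qed.

Lemma crd_basis n m : (n < 7)%N -> (m < 7)%N -> crd 'e[n] m = (m == n)%:R.
Proof. by move=> hn hm; rewrite /crd mxE eqxx -val_eqE /= !inordK. Qed.

Lemma crdD u v n : crd (u + v) n = crd u n + crd v n.
Proof. by rewrite /crd mxE. Qed.

Lemma crdN u n : crd (- u) n = - crd u n.
Proof. by rewrite /crd mxE. Qed.

Lemma crdZ (k : R) u n : crd (k *: u) n = k * crd u n.
Proof. by rewrite /crd mxE. Qed.

Lemma crd0 n : crd (0 : 'rV[R]_7) n = 0.
Proof. by rewrite /crd mxE. Qed.

Lemma e3E i j k u v w : e3 i j k u v w =
    crd u i * crd v j * crd w k - crd u i * crd w j * crd v k
  - crd v i * crd u j * crd w k + crd v i * crd w j * crd u k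
  + crd w i * crd u j * crd v k - crd w i * crd v j * crd u k.
Proof.
by rewrite /e3 (det_mx33 (fun r s : nat => crd (match s with 0 => u | 1 => v | _ => w end)
                                               (match r with 0 => i | 1 => j | _ => k end))).
Qed.

Lemma crd_cross u v n : (n < 7)%N -> crd (cross u v) n =
  let: (u0, u1, u2, u3, u4, u5, u6) :=
    (crd u 0, crd u 1, crd u 2, crd u 3, crd u 4, crd u 5, crd u 6) in
  let: (v0, v1, v2, v3, v4, v5, v6) :=
    (crd v 0, crd v 1, crd v 2, crd v 3, crd v 4, crd v 5, crd v 6) in
  match n with
  | 0 => u1 * v2 - u2 * v1 + u3 * v4 - u4 * v3 - u5 * v6 + u6 * v5
  | 1 => u2 * v0 - u0 * v2 + u3 * v5 - u5 * v3 + u4 * v6 - u6 * v4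
  | 2 => u0 * v1 - u1 * v0 + u3 * v6 - u6 * v3 + u5 * v4 - u4 * v5
  | 3 => u4 * v0 - u0 * v4 + u5 * v1 - u1 * v5 + u6 * v2 - u2 * v6
  | 4 => u0 * v3 - u3 * v0 + u2 * v5 - u5 * v2 + u6 * v1 - u1 * v6
  | 5 => u0 * v6 - u6 * v0 + u1 * v3 - u3 * v1 + u4 * v2 - u2 * v4
  | _ => u5 * v0 - u0 * v5 + u1 * v4 - u4 * v1 + u2 * v3 - u3 * v2
  end.
Proof.
move=> hn; rewrite [LHS]/crd mxE /phi !e3E.
by case: n hn => [|[|[|[|[|[|[|n]]]]]]] // _; rewrite !crd_basis //=; ring.
Qed.

Lemma dot7 u v : dot u v =
  crd u 0 * crd v 0 + crd u 1 * crd v 1 + crd u 2 * crd v 2 + crd u 3 * crd v 3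
  + crd u 4 * crd v 4 + crd u 5 * crd v 5 + crd u 6 * crd v 6.
Proof. by rewrite /dot !big_ord_recl big_ord0 !crdE /= addr0 !addrA. Qed.

Ltac coord := rewrite ?dot7 ?(crdD, crdN, crdZ, crd0, crd_cross) //=.
Ltac coord_ring := first [apply: eq_row7; coord; ring | coord; ring].

Lemma crossC u v : cross u v = - cross v u.
Proof. coord_ring. Qed.

Lemma crossxx u : cross u u = 0.
Proof. coord_ring. Qed.

Lemma crossDl u v w : cross (u + v) w = cross u w + cross v w.
Proof. coord_ring. Qed.

Lemma crossDr u v w : cross u (v + w) = cross u v + cross u w.
Proof. coord_ring. Qed.

Lemma crossZl k u v : cross (k *: u) v = k *: cross u v.
Proof. coord_ring. Qed.

Lemma crossZr k u v : cross u (k *: v) = k *: cross u v.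
Proof. coord_ring. Qed.

Lemma crossNl u v : cross (- u) v = - cross u v.
Proof. coord_ring. Qed.

Lemma crossNr u v : cross u (- v) = - cross u v.
Proof. coord_ring. Qed.

Lemma cross0l u : cross 0 u = 0.
Proof. coord_ring. Qed.

Lemma cross0r u : cross u 0 = 0.
Proof. coord_ring. Qed.

Lemma dotC u v : dot u v = dot v u.
Proof. coord_ring. Qed.

Lemma dotNl u v : dot (- u) v = - dot u v.
Proof. coord_ring. Qed.

Lemma dot_crossl u v : dot u (cross u v) = 0.
Proof. coord_ring. Qed.

Lemma dot_crossr u v : dot v (cross u v) = 0.
Proof. coord_ring. Qed.

Lemma dot_cross_shift u v w : dot u (cross v w) = dot (cross u v) w.
Proof. coord_ring. Qed.

Lemma dot_cross_cross u v w :
  dot (cross u v) (cross u w) = dot u u * dot v w - dot u v * dot u w.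
Proof. coord_ring. Qed.

Lemma cross_cross u v : cross u (cross u v) = dot u v *: u - dot u u *: v.
Proof. coord_ring. Qed.

Lemma cross_alternative u v w : cross u (cross v w) + cross (cross u v) w =
  (2 * dot u w) *: v - dot u v *: w - dot v w *: u.
Proof. coord_ring. Qed.

Lemma dotZl k u v : dot (k *: u) v = k * dot u v.
Proof. coord_ring. Qed.

Lemma dotZr k u v : dot u (k *: v) = k * dot u v.
Proof. coord_ring. Qed.

Lemma dotE u v : dot u v = (u *m v^T) 0 0.
Proof. by rewrite /dot mxE; apply: eq_bigr => i _; rewrite mxE. Qed.

Lemma cross_anti_assoc u v w : dot u v = 0 -> dot u w = 0 -> dot v w = 0 ->
  cross u (cross v w) = - cross (cross u v) w.
Proof.
move=> uv uw vw; apply/eqP; rewrite -addr_eq0 cross_alternative uv uw vw.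
by rewrite mulr0 !scale0r !subr0.
Qed.

Lemma dot_gt0 u : u != 0 -> 0 < dot u u.
Proof.
move=> nu; rewrite lt_def sumr_ge0 ?andbT => [|i _]; last by rewrite -expr2 sqr_ge0.
apply: contra nu => /eqP u0; apply/eqP/rowP => i; rewrite mxE.
apply/eqP; rewrite -sqrf_eq0 expr2.
by move: u0 => /psumr_eq0P -> // j _; rewrite -expr2 sqr_ge0.
Qed.

Lemma unit_scale u : u != 0 -> exists k, dot (k *: u) (k *: u) = 1.
Proof.
move=> /dot_gt0 u0; exists (Num.sqrt (dot u u))^-1.
by rewrite dotZl dotZr mulrA -expr2 exprVn sqr_sqrtr ?ltW // mulVf ?gt_eqF.
Qed.

Lemma unit_in_kernel m (B : 'M[R]_(7, m)) : (\rank B < 7)%N ->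
  exists2 z, dot z z = 1 & z *m B = 0.
Proof.
move=> rB; set x := nz_row (kermx B).
have xB : x *m B = 0 by apply/sub_kermxP; exact: nz_row_sub.
have nx : x != 0 by rewrite nz_row_eq0 -mxrank_eq0 mxrank_ker subn_eq0 -ltnNge.
have [k xk] := unit_scale nx.
by exists (k *: x) => //; rewrite -scalemxAl xB scaler0.
Qed.

Lemma unit_orthogonal_in_kernel A (s : seq 'rV[R]_7) : (\rank A + size s < 7)%N ->
  exists z, [/\ dot z z = 1, z *m A = 0 & {in s, forall a, dot z a = 0}].
Proof.
move=> rAs; pose T := \matrix_(i < 7, j < size s) s`_j 0 i.
have rAT : (\rank (row_mx A T) < 7)%N.
  rewrite -mxrank_tr tr_row_mx -addsmxE; apply: leq_ltn_trans rAs.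
  by rewrite (leq_trans (mxrank_adds_leqif _ _)) // !mxrank_tr leq_add2l rank_leq_col.
have [z z1] := unit_in_kernel rAT.
rewrite mul_mx_row => /eqP; rewrite row_mx_eq0 => /andP[/eqP zA /eqP zT].
exists z; split=> // a sa; rewrite -(nth_index 0 sa).
have := congr1 (fun M : 'rV[R]_(size s) => M 0 (Ordinal (etrans (index_mem a s) sa))) zT.
by rewrite !mxE => <-; apply: eq_bigr => i _; rewrite mxE.
Qed.

Lemma unit_orthogonal (s : seq 'rV[R]_7) : (size s < 7)%N ->
  exists2 z, dot z z = 1 & {in s, forall a, dot z a = 0}.
Proof.
move=> hs; have [|z [z1 _ zs]] := @unit_orthogonal_in_kernel 0 s; last by exists z.
by rewrite mxrank0.
Qed.

Definition cross_preserving A :=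
  forall x y, cross (x *m A) (y *m A) = cross x y *m A.

Definition adapted_triple a b c :=
  [/\ dot a a = 1, dot b b = 1 & dot c c = 1] /\
  [/\ dot a b = 0, dot a c = 0, dot b c = 0 & dot (cross a b) c = 0].

Definition frame_row a b c (n : nat) : 'rV[R]_7 :=
  match n with
  | 0 => a | 1 => b | 2 => cross a b | 3 => c
  | 4 => cross a c | 5 => cross b c | _ => cross (cross a b) c
  end.

Definition g2_frame a b c : 'M[R]_7 := \matrix_(i < 7, j < 7) frame_row a b c i 0 j.

Definition cross_line x y z := [/\ cross x y = z, cross y z = x & cross z x = y].

Definition unit_line x y z := [/\ dot x x = 1, dot y y = 1, dot x y = 0 & cross x y = z].

Lemma unit_line_dot x y z : unit_line x y z ->
  [/\ dot x z = 0, dot y z = 0 & dot z z = 1].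
Proof.
case=> x1 y1 xy <-; rewrite dot_crossl dot_crossr dot_cross_cross x1 y1 xy.
by split=> //; ring.
Qed.

Lemma unit_line_cross x y z : unit_line x y z -> cross_line x y z.
Proof.
case=> x1 y1 xy <-; split=> //.
  by rewrite [cross x y]crossC crossNr cross_cross dotC xy y1 scale0r scale1r sub0r opprK.
by rewrite crossC cross_cross xy x1 scale0r scale1r sub0r opprK.
Qed.

Lemma frame_lines a b c : adapted_triple a b c ->
  let ab := cross a b in let ac := cross a c in let bc := cross b c in
  let abc := cross ab c in
  [/\ unit_line a b ab, unit_line a c ac, unit_line b c bc, unit_line ab c abc &
      [/\ unit_line bc a abc, unit_line b ac abc & unit_line ab bc ac]].
Proof.
case=> [[a1 b1 c1] [ab ac bc abc]] /=.
have [l1 l2 l3] : [/\ unit_line a b (cross a b), unit_line a c (cross a c)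
                    & unit_line b c (cross b c)] by [].
have [_ b_ab ab1] := unit_line_dot l1; have [_ _ ac1] := unit_line_dot l2.
have [_ _ bc1] := unit_line_dot l3; have [_ ba_a _] := unit_line_cross l1.
have ba : dot b a = 0 by rewrite dotC.
have ab_b : dot (cross a b) b = 0 by rewrite dotC.
split=> //; split.
- split=> //; first by rewrite dotC dot_cross_shift.
  by rewrite crossC (cross_anti_assoc ab ac bc) opprK.
- split=> //; first by rewrite dot_cross_shift [cross b a]crossC dotNl abc oppr0.
  by rewrite (cross_anti_assoc ba bc ac) [cross b a]crossC crossNl opprK.
split=> //.
  by rewrite [cross a b]crossC dotNl dot_cross_cross b1 ac ba bc; ring.
by rewrite (cross_anti_assoc ab_b abc bc) [cross (cross a b) b]crossC ba_a crossNl opprK.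
Qed.

Lemma row_g2_frame a b c (i : 'I_7) : row i (g2_frame a b c) = frame_row a b c i.
Proof. by apply/rowP => j; rewrite !mxE. Qed.

Lemma mul_g2_frame a b c x : x *m g2_frame a b c =
  crd x 0 *: a + crd x 1 *: b + crd x 2 *: cross a b + crd x 3 *: c
  + crd x 4 *: cross a c + crd x 5 *: cross b c + crd x 6 *: cross (cross a b) c.
Proof.
rewrite mulmx_sum_row !big_ord_recl big_ord0 !row_g2_frame !crdE /=.
by rewrite addr0 !addrA.
Qed.

Lemma g2_frame_orthonormal a b c : adapted_triple a b c ->
  forall i j : 'I_7, dot (row i (g2_frame a b c)) (row j (g2_frame a b c)) = (i == j)%:R.
Proof.
move=> H; have [[a1 b1 c1] [ab ac bc abc]] := H.
have [l1 l2 l3 l4 [l5 l6 l7]] := frame_lines H.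
have [? ? ?] := unit_line_dot l1; have [? ? ?] := unit_line_dot l2.
have [? ? ?] := unit_line_dot l3; have [? ? ?] := unit_line_dot l4.
have [? ? _] := unit_line_dot l5; have [? ? _] := unit_line_dot l6.
have [? ? _] := unit_line_dot l7; have [_ _ ? _] := l5; have [_ _ ? _] := l6.
have [_ _ ? _] := l7.
(* Any two frame vectors lie on one of the seven lines. *)
move=> i j; rewrite !row_g2_frame -val_eqE.
case: i => [[|[|[|[|[|[|[|i]]]]]]]] //= _; case: j => [[|[|[|[|[|[|[|j]]]]]]]] //= _;
  by [ | rewrite dotC].
Qed.

Lemma cross_lineC x y z : cross_line x y z ->
  [/\ cross y x = - z, cross z y = - x & cross x z = - y].
Proof. by case=> xy yz zx; rewrite crossC xy [cross z y]crossC yz [cross x z]crossC zx. Qed.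

Lemma frame_cross_lines a b c : adapted_triple a b c ->
  let ab := cross a b in let ac := cross a c in let bc := cross b c in
  let abc := cross ab c in
  [/\ cross_line a b ab, cross_line a c ac, cross_line b c bc, cross_line ab c abc &
      [/\ cross_line bc a abc, cross_line b ac abc & cross_line ab bc ac]].
Proof.
move=> /frame_lines /= [l1 l2 l3 l4 [l5 l6 l7]] /=.
by split; [exact: unit_line_cross.. | split; exact: unit_line_cross].
Qed.

Lemma g2_frame_cross a b c : adapted_triple a b c ->
  cross_preserving (g2_frame a b c).
Proof.
move=> /frame_cross_lines /= -[l1 l2 l3 l4 [l5 l6 l7]] x y.
rewrite !mul_g2_frame !(crossDl, crossDr, crossZl, crossZr) !crossxx.
move: l1 l2 l3 l4 l5 l6 l7 (cross_lineC l1) (cross_lineC l2) (cross_lineC l3)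
  (cross_lineC l4) (cross_lineC l5) (cross_lineC l6) (cross_lineC l7).
(* The seven lines, in both orientations, give all products of two distinct frame
   vectors; generalizing the frame vectors keeps these rewrites from looping. *)
move: (cross (cross a b) c) => abc; move: (cross a b) (cross a c) (cross b c) => ab ac bc.
do 14 (case=> e1 e2 e3; rewrite ?e1 ?e2 ?e3; clear e1 e2 e3).
by apply: eq_row7; coord; ring.
Qed.

Lemma basis_mul_g2_frame a b c n : (n < 7)%N ->
  'e[n] *m g2_frame a b c = frame_row a b c n.
Proof. by move=> hn; rewrite -rowE row_g2_frame inordK. Qed.

Lemma adapted_triple_complete a b : dot a a = 1 -> dot b b = 1 -> dot a b = 0 ->
  exists c, adapted_triple a b c.
Proof.
move=> a1 b1 ab.
have [c c1 cs] := @unit_orthogonal [:: a; b; cross a b] isT.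
exists c; split; split=> //; rewrite dotC cs // !inE eqxx ?orbT //.
Qed.

Lemma orthonormal_rows_mx A :
  (forall i j : 'I_7, dot (row i A) (row j A) = (i == j)%:R) -> A *m A^T = 1%:M.
Proof.
move=> hA; apply/matrixP => i j; rewrite [RHS]mxE -hA dotE !mxE.
by apply: eq_bigr => k _; rewrite !mxE.
Qed.

Lemma cross_preservingM A B : cross_preserving A -> cross_preserving B ->
  cross_preserving (A *m B).
Proof. by move=> hA hB x y; rewrite !mulmxA hB hA. Qed.

Lemma cross_preserving_tr A : A *m A^T = 1%:M -> cross_preserving A ->
  cross_preserving A^T.
Proof.
move=> AAt hA x y; have AtA := mulmx1C AAt.
by rewrite -[cross _ _]mulmx1 -AAt mulmxA -hA -!mulmxA AtA !mulmx1.
Qed.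

Definition sign_flip : 'M[R]_7 := diag_mx (\row_(j < 7) (-1) ^+ (~~ odd j)).

Lemma crd_sign_flip u n : (n < 7)%N ->
  crd (u *m sign_flip) n = crd u n * (-1) ^+ (~~ odd n).
Proof. by move=> hn; rewrite /crd mul_mx_diag !mxE inordK. Qed.

Lemma sign_flip_cross : cross_preserving sign_flip.
Proof. by move=> x y; apply: eq_row7; coord; rewrite !crd_sign_flip //=; coord; ring. Qed.

Lemma det_sign_flip : \det sign_flip = 1.
Proof. by rewrite det_diag big_ord_recl /= !big_ord_recl big_ord0 !mxE /=; ring. Qed.

Lemma mx_crd A i j : A (inord i) (inord j) = crd ('e[i] *m A) j.
Proof. by rewrite -rowE /crd mxE. Qed.

Lemma det_cross_preserving_fix_ge0 A : cross_preserving A -> 'e[0] *m A = 'e[0] ->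
  0 <= \det A.
Proof.
move=> hA A0.
have rowJ x y : cross 'e[0] x = y -> y *m A = cross 'e[0] (x *m A).
  by move=> <-; rewrite -hA A0.
have e01 : cross 'e[0] 'e[1] = 'e[2] by apply: eq_row7; coord; rewrite !crd_basis //=; ring.
have e03 : cross 'e[0] 'e[3] = 'e[4] by apply: eq_row7; coord; rewrite !crd_basis //=; ring.
have e06 : cross 'e[0] 'e[6] = 'e[5] by apply: eq_row7; coord; rewrite !crd_basis //=; ring.
have J1 := rowJ _ _ e01; have J3 := rowJ _ _ e03; have J6 := rowJ _ _ e06.
(* Rows 2, 4, 5 are [cross e_0] of rows 1, 3, 6, so after reordering the coordinates A
   is block lower triangular with diagonal blocks 1 and [[P, -Q], [Q, P]]. *)
pose s := perm g2_perm_inj.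
pose M : 'M[R]_(1 + (3 + 3)) := row_perm s (col_perm s A).
have urM : ursubmx M = 0.
  apply/matrixP => i j; rewrite !mxE !permE /g2_perm_fun.
  case: i j => [[|//] ?] [[|[|[|[|[|[|//]]]]]] ?] /=;
  by rewrite mx_crd A0 crd_basis.
have ulM : \det (ulsubmx M) = 1.
  by rewrite det_mx11 !mxE !permE /g2_perm_fun /= mx_crd A0 crd_basis.
pose N := drsubmx M.
have urN : ursubmx N = - dlsubmx N.
  apply/matrixP => i j; rewrite !mxE !permE /g2_perm_fun.
  case: i j => [[|[|[|//]]] ?] [[|[|[|//]]] ?] /=;
  by rewrite !mx_crd ?J1 ?J3 ?J6; coord; rewrite !crd_basis //=; ring.
have drN : drsubmx N = ulsubmx N.
  apply/matrixP => i j; rewrite !mxE !permE /g2_perm_fun.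
  case: i j => [[|[|[|//]]] ?] [[|[|[|//]]] ?] /=;
  by rewrite !mx_crd ?J1 ?J3 ?J6; coord; rewrite !crd_basis //=; ring.
rewrite -(det_conj_perm s) -/M -(submxK M) urM (@det_lblock _ 1 (3 + 3)) ulM mul1r.
by rewrite -/N -(submxK N) urN drN det_realify_ge0.
Qed.

Lemma det_cross_preserving A : A *m A^T = 1%:M -> cross_preserving A -> \det A = 1.
Proof.
move=> AAt hA; case: (det_orthogonal AAt) => // dA; exfalso.
have [v0 nv0 v0A] := orthogonal_eigen_neg1 AAt dA.
have [k v1] := unit_scale nv0; set v := k *: v0 in v1.
have vA : v *m A = - v by rewrite -scalemxAl v0A scalerN.
have [w w1 wv] := @unit_orthogonal [:: v] isT.
have [z vwz] : exists z, adapted_triple v w z.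
  by apply: adapted_triple_complete => //; rewrite dotC wv ?mem_head.
pose F := g2_frame v w z.
have FFt : F *m F^T = 1%:M by apply/orthonormal_rows_mx/g2_frame_orthonormal.
have e0F : 'e[0] *m F = v by rewrite basis_mul_g2_frame.
have e0K : 'e[0] *m sign_flip = - 'e[0].
  by apply: eq_row7; rewrite !crd_sign_flip //; coord; rewrite !crd_basis //=; ring.
pose L := F *m A *m F^T *m sign_flip.
have L0 : 'e[0] *m L = 'e[0].
  by rewrite /L !mulmxA e0F vA mulNmx -e0F -mulmxA FFt mulmx1 mulNmx e0K opprK.
have hL : cross_preserving L.
  rewrite /L; apply: cross_preservingM _ sign_flip_cross.
  apply: cross_preservingM _ (cross_preserving_tr FFt (g2_frame_cross vwz)).
  exact: cross_preservingM (g2_frame_cross vwz) hA.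
have := det_cross_preserving_fix_ge0 hL L0.
have detF2 : \det F * \det F = 1 by rewrite -{2}det_tr -det_mulmx FFt det1.
rewrite /L !det_mulmx det_tr det_sign_flip dA mulr1 mulrAC detF2.
by rewrite mul1r oppr_ge0 ler10.
Qed.

Lemma g2_frame_adapted a b c : adapted_triple a b c ->
  G2_adapted (g2_frame a b c).
Proof.
move=> abc; have FFt := orthonormal_rows_mx (g2_frame_orthonormal abc).
split; first exact: g2_frame_orthonormal.
split; first by rewrite (det_cross_preserving FFt (g2_frame_cross abc)) ltr01.
by rewrite /frame_vec !row_g2_frame !inordK.
Qed.

Lemma in_g2_conj E X : E *m E^T = 1%:M -> cross_preserving E -> in_g2 X ->
  in_g2 (E *m X *m E^T).
Proof.
move=> EEt hE [skX dX]; split.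
  by rewrite /Defs.skew !trmx_mul trmxK skX mulNmx mulmxN mulmxA.
have hEt := cross_preserving_tr EEt hE.
move=> v w; rewrite !mulmxA -hE dX mulmxDl -!hEt.
by rewrite -!(mulmxA _ E) EEt !mulmx1.
Qed.

Lemma kernel_adapted_triple X :
  (forall v w, cross v w *m X = cross (v *m X) w + cross v (w *m X)) ->
  (\rank X <= 4)%N ->
  exists a b c, [/\ adapted_triple a b c, a *m X = 0, b *m X = 0 & cross a b *m X = 0].
Proof.
move=> dX rX.
have [|a [a1 aX _]] := @unit_orthogonal_in_kernel X [::]; first by rewrite /=; lia.
have [|b [b1 bX ba]] := @unit_orthogonal_in_kernel X [:: a]; first by rewrite /=; lia.
have ab : dot a b = 0 by rewrite dotC ba ?mem_head.
have [c abc] := adapted_triple_complete a1 b1 ab.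
by exists a, b, c; split; rewrite // dX aX bX cross0l cross0r addr0.
Qed.

Lemma in_g2_normal_form Y : in_g2 Y ->
  'e[0] *m Y = 0 -> 'e[1] *m Y = 0 -> 'e[2] *m Y = 0 ->
  exists a b c : R, Y = normal_form a b c.
Proof.
move=> [skY dY] Y0 Y1 Y2.
have entry (i j : 'I_7) : Y i j = crd ('e[i] *m Y) j by rewrite -mx_crd !inord_val.
have sk (i j : 'I_7) : Y i j = - Y j i.
  by have := congr1 (fun M : 'M[R]_7 => M j i) skY; rewrite !mxE.
have Y3 j : (j <= 3)%N -> crd ('e[3] *m Y) j = 0.
  move=> hj; have := sk (inord 3) (inord j); rewrite !entry !inordK //; last by lia.
  case: j hj => [|[|[|[|//]]]] _; rewrite ?Y0 ?Y1 ?Y2 ?crd0 ?oppr0 //.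
  by move=> h; lra.
have rowD p q : cross 'e[p] 'e[3] = 'e[q] -> 'e[p] *m Y = 0 ->
    'e[q] *m Y = cross 'e[p] ('e[3] *m Y).
  by move=> <- pY; rewrite dY pY cross0l add0r.
have Y4 : 'e[4] *m Y = cross 'e[0] ('e[3] *m Y).
  by apply: rowD Y0; apply: eq_row7; coord; rewrite !crd_basis //=; ring.
have Y5 : 'e[5] *m Y = cross 'e[1] ('e[3] *m Y).
  by apply: rowD Y1; apply: eq_row7; coord; rewrite !crd_basis //=; ring.
have Y6 : 'e[6] *m Y = cross 'e[2] ('e[3] *m Y).
  by apply: rowD Y2; apply: eq_row7; coord; rewrite !crd_basis //=; ring.
exists (- crd ('e[3] *m Y) 4), (- crd ('e[3] *m Y) 5), (- crd ('e[3] *m Y) 6).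
apply/matrixP => i j; rewrite entry mxE.
case: i => [[|[|[|[|[|[|[|//]]]]]]] _] /=; rewrite ?Y0 ?Y1 ?Y2 ?Y4 ?Y5 ?Y6;
  case: j => [[|[|[|[|[|[|[|//]]]]]]] _] /=; coord;
  by rewrite ?crd_basis ?(Y3 0, Y3 1, Y3 2, Y3 3) //=; ring.
Qed.

End G2.

Theorem corollary3p2 (R : realType) (X : 'M[R]_7) :
  in_g2 X -> (\rank X <= 4)%N ->
  exists E : 'M[R]_7, G2_adapted E /\
    exists a b c : R, mx_in_frame X E = normal_form a b c.
Proof.
move=> gX rX; have [a [b [c [abc aX bX abX]]]] := kernel_adapted_triple gX.2 rX.
have EEt := orthonormal_rows_mx (g2_frame_orthonormal abc).
exists (g2_frame a b c); split; first exact: g2_frame_adapted.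
apply: in_g2_normal_form; first exact: in_g2_conj EEt (g2_frame_cross abc) gX.
all: by rewrite !mulmxA basis_mul_g2_frame //= ?aX ?bX ?abX !mul0mx.
Qed.
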